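(* Let $n=1$, $d=2$, $u_1$ a positive integer and $u_2=1$, and suppose the constants are chosen so that the point $V_2=(\lambda^{(1)}_2,\lambda^{(c)}_2)$ lies in the interior of the solid cone $K_1=\{(a,b)\in\mathbb R\times\mathbb C: a-\lambda^{(1)}_1/u_1\geqslant|b-\lambda^{(c)}_1/u_1|\}$. Then $N$ acts freely on $\mu^{-1}(0)$, condition (S) holds, so $M=\mu^{-1}(0)/N$ is a smooth $4$-manifold, and the induced hypersymplectic structure on $M$ is non-degenerate everywhere if and only if $u_1=1$.
   Context: Setting: $\mathbb C^{2,2}=\mathbb C^2\times\mathbb C^2$ with coordinates $(z,w)$, $g=\mathrm{Re}\sum_k(dz_k\,d\bar z_k-dw_k\,d\bar w_k)$, $I(z,w)=(iz,-iw)$, $S(z,w)=(w,z)$, $T=IS$, $\omega_A(Y,Z)=g(Y,AZ)$; $\mathbb T^2$ acts by $(z_k,w_k)\mapsto(e^{i\theta_k}z_k,e^{i\theta_k}w_k)$. With $u_1,u_2\in\mathbb Z$, $\beta\colon\mathbb R^2\to\mathbb R$, $e_k\mapsto u_k$, $\mathfrak n=\ker\beta$ with inclusion $\iota$, and $N\subset\mathbb T^2$ the kernel of the induced homomorphism $\mathbb T^2\to\mathbb T^1$. Fix real $\lambda^{(j)}_k$, $\lambda^{(c)}_k=\lambda^{(2)}_k+i\lambda^{(3)}_k$; $\mu_I(z,w)=\sum_k(\tfrac12(|z_k|^2+|w_k|^2)+\lambda^{(1)}_k)\iota^*e_k$, $(\mu_S+i\mu_T)(z,w)=\sum_k(iz_k\bar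 w_k+\lambda^{(c)}_k)\iota^*e_k$ (identifying $\mathbb R^2$ with its dual). Condition (S): at no $p\in\mu^{-1}(0)$ is there nonzero $(X_1,X_2,X_3)\in\mathfrak n^3$ with $(IX_1+SX_2+TX_3)_p=0$. The induced forms $\omega'_A$ on $M$ satisfy $\pi^*\omega'_A=\omega_A|_{\mu^{-1}(0)}$; non-degeneracy means all three are non-degenerate at every point. *)

From HB Require Import structures.
From mathcomp Require Import all_boot all_order all_algebra.
From mathcomp Require Import complex.
Set Implicit Arguments. Unset Strict Implicit. Unset Printing Implicit Defensive.
Import Order.TTheory GRing.Theory Num.Theory.
Local Open Scope ring_scope.
Local Open Scope complex_scope.

Section HK.
Variable R : rcfType.
Local Notation C := R[i].

(* A point (or tangent vector) of C^{2,2} = C^2 x C^2 : (z, w), z w : 'I_2 -> C. *)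
Definition pt := (('I_2 -> C) * ('I_2 -> C))%type.

Definition peq (p q : pt) : Prop := forall k, p.1 k = q.1 k /\ p.2 k = q.2 k.
Definition padd (p q : pt) : pt := (fun k => p.1 k + q.1 k, fun k => p.2 k + q.2 k).
Definition pzero : pt := (fun _ => 0, fun _ => 0).

Definition opI (p : pt) : pt := (fun k => 'i * p.1 k, fun k => - ('i * p.2 k)).
Definition opS (p : pt) : pt := (p.2, p.1).
Definition opT (p : pt) : pt := opI (opS p).

Definition gmet (Y Z : pt) : R :=
  complex.Re (\sum_(k < 2) (Y.1 k * (Z.1 k)^* - Y.2 k * (Z.2 k)^*)).
Definition omega (A : pt -> pt) (Y Z : pt) : R := gmet Y (A Z).

(* Lie algebra n = ker beta, beta(e_k) = u_k *)
Definition in_n (u : 'I_2 -> int) (X : 'I_2 -> R) : Prop :=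
  \sum_(k < 2) (u k)%:~R * X k = 0.

(* Fundamental vector field of X in Lie(T^2) = R^2 at p:
   d/dt (e^{i t X_k} z_k, e^{i t X_k} w_k) at t = 0. *)
Definition fund (X : 'I_2 -> R) (p : pt) : pt :=
  (fun k => 'i * (X k)%:C * p.1 k, fun k => 'i * (X k)%:C * p.2 k).

(* Moment maps, evaluated on X in n (iota^* e_k applied to X is X_k). *)
Definition muI (l1 : 'I_2 -> R) (p : pt) (X : 'I_2 -> R) : R :=
  \sum_(k < 2) (2^-1 * ((Normc.normc (p.1 k)) ^+ 2 + (Normc.normc (p.2 k)) ^+ 2) + l1 k) * X k.
Definition muC (lc : 'I_2 -> C) (p : pt) (X : 'I_2 -> R) : C :=
  \sum_(k < 2) ('i * p.1 k * (p.2 k)^* + lc k) * (X k)%:C.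

Definition in_level (u : 'I_2 -> int) (l1 : 'I_2 -> R) (lc : 'I_2 -> C) (p : pt) : Prop :=
  forall X, in_n u X -> muI l1 p X = 0 /\ muC lc p X = 0.

Definition dmuI (p v : pt) (X : 'I_2 -> R) : R :=
  \sum_(k < 2) complex.Re (p.1 k * (v.1 k)^* + p.2 k * (v.2 k)^*) * X k.
Definition dmuC (p v : pt) (X : 'I_2 -> R) : C :=
  \sum_(k < 2) 'i * (v.1 k * (p.2 k)^* + p.1 k * (v.2 k)^*) * (X k)%:C.

Definition tangent (u : 'I_2 -> int) (p v : pt) : Prop :=
  forall X, in_n u X -> dmuI p v X = 0 /\ dmuC p v X = 0.

(* The torus T^2 (pairs of unit complex numbers) and the subgroup N, the kernel
   of the induced homomorphism T^2 -> T^1, (a_1, a_2) |-> a_1^{u_1} a_2^{u_2}. *)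
Definition in_N (u : 'I_2 -> int) (a : 'I_2 -> C) : Prop :=
  (forall k, Normc.normc (a k) = 1) /\ \prod_(k < 2) (a k) ^ (u k) = 1.
Definition act (a : 'I_2 -> C) (p : pt) : pt :=
  (fun k => a k * p.1 k, fun k => a k * p.2 k).

Definition N_acts_freely (u : 'I_2 -> int) (l1 : 'I_2 -> R) (lc : 'I_2 -> C) : Prop :=
  forall p, in_level u l1 lc p ->
  forall a, in_N u a -> peq (act a p) p -> forall k, a k = 1.

Definition condS (u : 'I_2 -> int) (l1 : 'I_2 -> R) (lc : 'I_2 -> C) : Prop :=
  forall p, in_level u l1 lc p ->
  forall X1 X2 X3, in_n u X1 -> in_n u X2 -> in_n u X3 ->
  peq (padd (opI (fund X1 p)) (padd (opS (fund X2 p)) (opT (fund X3 p)))) pzero ->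
  forall k, X1 k = 0 /\ X2 k = 0 /\ X3 k = 0.

(* omega'_A is non-degenerate at pi(p): since pi^* omega'_A = omega_A restricted
   to T_p mu^{-1}(0), this means the radical of omega_A on T_p mu^{-1}(0) is
   contained in the vertical space {X_p : X in n} = T_p (N p). *)
Definition nondeg_at (u : 'I_2 -> int) (A : pt -> pt) (p : pt) : Prop :=
  forall v, tangent u p v ->
  (forall w, tangent u p w -> omega A v w = 0) ->
  exists X, in_n u X /\ peq v (fund X p).

Definition hypersymplectic_nondeg (u : 'I_2 -> int) (l1 : 'I_2 -> R) (lc : 'I_2 -> C) : Prop :=
  forall p, in_level u l1 lc p ->
  nondeg_at u opI p /\ nondeg_at u opS p /\ nondeg_at u opT p.

Definition in_K1 (u : 'I_2 -> int) (l1 : 'I_2 -> R) (lc : 'I_2 -> C) (a : R) (b : C) : Prop :=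
  Normc.normc (b - lc ord0 / (u ord0)%:~R) <= a - l1 ord0 / (u ord0)%:~R.
Definition V2_in_interior_K1 (u : 'I_2 -> int) (l1 : 'I_2 -> R) (lc : 'I_2 -> C) : Prop :=
  exists2 e : R, 0 < e &
    forall (a : R) (b : C), `|a - l1 ord_max| < e -> Normc.normc (b - lc ord_max) < e ->
      in_K1 u l1 lc a b.

End HK.

(* On the level set, n is the line spanned by X0 = (1, -u_1).  Writing F for the
   fundamental field of X0 at p, the tangent space of mu^-1(0) is the g-orthogonal
   complement of IF, SF, TF; since F, IF, SF, TF are pairwise g-orthogonal with
   norms +-g(F,F), when g(F,F) <> 0 the radical of each omega_A on it is the line
   through F, i.e. vertical.  In coordinates the level set is cut out by three real
   equations whose constants (A, B) = u_1 V_2 - V_1 lie inside the open cone A > |B|.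
   This gives freeness (the pair (z_1, w_1) never vanishes), condition (S) (with
   Q = x_1 I + x_2 S + x_3 T one has Q^2 = x_2^2 + x_3^2 - x_1^2, while Qp = 0 forces
   x_1 B = -(x_2 + i x_3) A), and g(F,F) <> 0 when u_1 = 1.  For u_1 >= 2 an explicit
   point of the level set has g(F,F) = 0; there TF is tangent, lies in the radical
   of omega_I, and is not vertical. *)

From HB Require Import structures.
From mathcomp Require Import all_boot all_order all_algebra.
From mathcomp Require Import complex ring lra zify.
From Stdlib Require Import FunctionalExtensionality.
Import Order.TTheory GRing.Theory Num.Theory.
Local Open Scope ring_scope.
Local Open Scope complex_scope.
Set Implicit Arguments. Unset Strict Implicit. Unset Printing Implicit Defensive.

Lemma sum_ord2 (V : nmodType) (F : 'I_2 -> V) : \sum_(k < 2) F k = F ord0 + F ord_max.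
Proof. by rewrite !big_ord_recl big_ord0 addr0; congr (_ + F _); apply: val_inj. Qed.

Lemma prod_ord2 (V : comPzRingType) (F : 'I_2 -> V) : \prod_(k < 2) F k = F ord0 * F ord_max.
Proof. by rewrite !big_ord_recl big_ord0 mulr1; congr (_ * F _); apply: val_inj. Qed.

Lemma ord2P (k : 'I_2) : k = ord0 \/ k = ord_max.
Proof. by case: k => [[|[|//]] ?]; [left | right]; apply: val_inj. Qed.

Lemma normc_sqr (R : rcfType) (a b : R) : Normc.normc (a +i* b) ^+ 2 = a ^+ 2 + b ^+ 2.
Proof. by rewrite /= sqr_sqrtr // addr_ge0 ?sqr_ge0. Qed.

Lemma divc_real (R : rcfType) (x : R[i]) (r : R) :
  x / r%:C = (complex.Re x / r) +i* (complex.Im x / r).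
Proof. by case: x => a b; rewrite -fmorphV /=; congr (_ +i* _); ring. Qed.

Lemma cone_moment_relation (R : realFieldType) (U x1 x2 a b S0 S1 B0 B1 : R) :
  S0 - U * S1 = 2 * a -> B0 - U * B1 = b ->
  2 * x1 * B0 + x2 * S0 = 0 -> 2 * x1 * B1 + x2 * S1 = 0 -> x1 * b = - (x2 * a).
Proof.
move=> hS hB /eqP + /eqP; rewrite !addr_eq0 => /eqP e0 /eqP e1.
have two_neq0 : (2 : R) != 0 by rewrite pnatr_eq0.
apply: (mulfI two_neq0); transitivity (2 * x1 * B0 - U * (2 * x1 * B1)).
  by rewrite -hB; ring.
by rewrite e0 e1; transitivity (- x2 * (S0 - U * S1)); [ring | rewrite hS; ring].
Qed.

Lemma quadratic_root (R : rcfType) (U A B : R) : 1 < U -> 0 < A -> 0 <= B -> B < A ^+ 2 ->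
  exists2 m, 0 < m & B < m ^+ 2 /\ (U - 1) * m ^+ 2 - 2 * A * U * m + (U + 1) * B = 0.
Proof.
move=> U_gt1 A_gt0 B_ge0 B_lt.
set D := A ^+ 2 * U ^+ 2 - (U ^+ 2 - 1) * B.
have D_gt0 : 0 < D.
  rewrite (_ : D = U ^+ 2 * (A ^+ 2 - B) + B); last by rewrite /D; ring.
  by rewrite ltr_wpDr // mulr_gt0 ?exprn_gt0 ?subr_gt0 // (lt_trans ltr01).
have s_ge0 := sqrtr_ge0 D; have s2 := sqr_sqrtr (ltW D_gt0).
set s := Num.sqrt D in s_ge0 s2.
have U1_neq0 : U - 1 != 0 by rewrite subr_eq0 gt_eqF.
exists ((A * U + s) / (U - 1)).
  by rewrite divr_gt0 ?subr_gt0 // ltr_wpDr // mulr_gt0 // (lt_trans ltr01).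
split.
  apply: (lt_le_trans B_lt); rewrite ler_pXn2r ?nnegrE ?(ltW A_gt0) //.
    by rewrite ler_pdivlMr ?subr_gt0 //; nra.
  rewrite divr_ge0 ?subr_ge0 ?(ltW U_gt1) // addr_ge0 // mulr_ge0 // ltW //.
  exact: lt_trans ltr01 U_gt1.
apply: (mulfI U1_neq0); rewrite mulr0.
transitivity (s ^+ 2 - D); first by rewrite /D; field.
by rewrite s2 subrr.
Qed.

Section Points.
Variable R : rcfType.
Local Notation pt := (pt R).
Implicit Types (Y Z : pt) (r : R).

Definition pscale r Y : pt := (fun k => r%:C * Y.1 k, fun k => r%:C * Y.2 k).

(* The conjugation J(z, w) = (z, -w) makes g(Y, J Y) the Euclidean norm. *)
Definition pJ Y : pt := (Y.1, fun k => - Y.2 k).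

Definition mkpt (z1 z2 w1 w2 : R[i]) : pt :=
  (fun k => if k == ord0 then z1 else z2, fun k => if k == ord0 then w1 else w2).

Lemma pt_eq Y Z : Y.1 ord0 = Z.1 ord0 -> Y.1 ord_max = Z.1 ord_max ->
  Y.2 ord0 = Z.2 ord0 -> Y.2 ord_max = Z.2 ord_max -> Y = Z.
Proof.
case: Y Z => [z w] [z' w'] /= h1 h2 h3 h4.
by congr pair; apply: functional_extensionality => k; case: (ord2P k) => ->.
Qed.

Lemma peqP Y Z : peq Y Z -> Y = Z.
Proof.
move=> H; apply: pt_eq.
- by case: (H ord0).
- by case: (H ord_max).
- by case: (H ord0).
- by case: (H ord_max).
Qed.

Lemma pt_coords (P : pt -> Prop) :
  (forall a b c d e f g h : R, P (mkpt (a +i* b) (c +i* d) (e +i* f) (g +i* h))) ->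
  forall Y, P Y.
Proof.
move=> HP Y; have -> : Y = mkpt (Y.1 ord0) (Y.1 ord_max) (Y.2 ord0) (Y.2 ord_max).
  exact: pt_eq.
by case: (Y.1 ord0); case: (Y.1 ord_max); case: (Y.2 ord0); case: (Y.2 ord_max).
Qed.

End Points.

(* Every identity between points below is a polynomial identity in their
   eight real coordinates. *)
Ltac coords Y := elim/pt_coords: Y => ? ? ? ? ? ? ? ?.
Ltac pt_ring :=
  rewrite /gmet /opI /opS /opT /padd /pscale /pJ /mkpt ?sum_ord2 /=;
  first [ring | apply: pt_eq => /=; congr (_ +i* _); ring].

Section Quaternionic.
Variable R : rcfType.
Local Notation pt := (pt R).
Implicit Types (Y Z W : pt) (r a b c d : R).

Lemma gmetC Y Z : gmet Y Z = gmet Z Y. Proof. coords Y; coords Z; pt_ring. Qed.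
Lemma gmetDl Y Z W : gmet (padd Y Z) W = gmet Y W + gmet Z W.
Proof. coords Y; coords Z; coords W; pt_ring. Qed.
Lemma gmetDr Y Z W : gmet Y (padd Z W) = gmet Y Z + gmet Y W.
Proof. by rewrite gmetC gmetDl !(gmetC Y). Qed.
Lemma gmetZl r Y Z : gmet (pscale r Y) Z = r * gmet Y Z.
Proof. coords Y; coords Z; pt_ring. Qed.
Lemma gmetZr r Y Z : gmet Y (pscale r Z) = r * gmet Y Z.
Proof. by rewrite gmetC gmetZl gmetC. Qed.

Lemma gmet_opI Y Z : gmet Y (opI Z) = - gmet (opI Y) Z. Proof. coords Y; coords Z; pt_ring. Qed.
Lemma gmet_opS Y Z : gmet Y (opS Z) = - gmet (opS Y) Z. Proof. coords Y; coords Z; pt_ring. Qed.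
Lemma gmet_opT Y Z : gmet Y (opT Z) = - gmet (opT Y) Z. Proof. coords Y; coords Z; pt_ring. Qed.

Lemma opI_pscale r Y : opI (pscale r Y) = pscale r (opI Y). Proof. coords Y; pt_ring. Qed.
Lemma opS_pscale r Y : opS (pscale r Y) = pscale r (opS Y). Proof. coords Y; pt_ring. Qed.
Lemma opT_pscale r Y : opT (pscale r Y) = pscale r (opT Y). Proof. coords Y; pt_ring. Qed.

Lemma gmet_pJ_eq0 Y : gmet Y (pJ Y) = 0 -> Y = pzero R.
Proof.
elim/pt_coords: Y => a b c d e f g h.
rewrite /gmet /pJ /mkpt sum_ord2 /= => H.
have {}H : a^+2 + b^+2 + c^+2 + d^+2 + e^+2 + f^+2 + g^+2 + h^+2 = 0 by rewrite -H; ring.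
have sq0 (x : R) : x ^+ 2 = 0 -> x = 0 by move/eqP; rewrite sqrf_eq0 => /eqP.
have [-> -> -> ->] : [/\ a = 0, b = 0, c = 0 & d = 0] by split; apply: sq0; nra.
have [-> -> -> ->] : [/\ e = 0, f = 0, g = 0 & h = 0] by split; apply: sq0; nra.
by apply: pt_eq => /=.
Qed.

Definition qcomb a b c d Y : pt :=
  padd (pscale a Y) (padd (pscale b (opI Y)) (padd (pscale c (opS Y)) (pscale d (opT Y)))).

Definition qspan Y v := exists a b c d, v = qcomb a b c d Y.

(* By [tangentE] below, T_p mu^-1(0) = orthIST (fund n_gen p). *)
Definition orthIST Y v := [/\ gmet (opI Y) v = 0, gmet (opS Y) v = 0 & gmet (opT Y) v = 0].

Lemma gmet_qcomb a b c d Y :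
  [/\ gmet (opI Y) (qcomb a b c d Y) = b * gmet Y Y,
       gmet (opS Y) (qcomb a b c d Y) = - (c * gmet Y Y)
     & gmet (opT Y) (qcomb a b c d Y) = - (d * gmet Y Y)].
Proof. by coords Y; split; pt_ring. Qed.

Lemma gmet_orthIST_qcomb a b c d Y Z : orthIST Y Z ->
  gmet Z (qcomb a b c d Y) = a * gmet Z Y.
Proof.
case=> hI hS hT; rewrite /qcomb !gmetDr !gmetZr.
by rewrite !(gmetC Z) hI hS hT !mulr0 !addr0.
Qed.

Lemma padd_qcomb_eq0 a b c d Y v : padd v (qcomb a b c d Y) = pzero R ->
  v = qcomb (- a) (- b) (- c) (- d) Y.
Proof.
have cancel : padd (padd v (qcomb a b c d Y)) (qcomb (- a) (- b) (- c) (- d) Y) = v.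
  by coords v; coords Y; pt_ring.
by move=> H; rewrite -{1}cancel {}H {cancel}; coords Y; pt_ring.
Qed.

Definition tproj Y v : pt := let N := gmet Y Y in
  padd v (qcomb 0 (- gmet (opI Y) v / N) (gmet (opS Y) v / N) (gmet (opT Y) v / N) Y).

Lemma tproj_orthIST Y v : gmet Y Y != 0 -> orthIST Y (tproj Y v).
Proof.
move=> hN; have [hI hS hT] := gmet_qcomb 0 (- gmet (opI Y) v / gmet Y Y)
  (gmet (opS Y) v / gmet Y Y) (gmet (opT Y) v / gmet Y Y) Y.
by split; rewrite gmetDr ?hI ?hS ?hT; field.
Qed.

(* g is indefinite, so the non-degeneracy of g on [orthIST Y] is not automatic:
   it comes from testing against the projection of [pJ e]. *)
Lemma orthIST_perp Y v : gmet Y Y != 0 ->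
  (forall w, orthIST Y w -> gmet v w = 0) -> exists b c d, v = qcomb 0 b c d Y.
Proof.
move=> hN hv; set e := tproj Y v.
have te : orthIST Y e := tproj_orthIST v hN.
have ge w : orthIST Y w -> gmet e w = 0.
  by move=> tw; rewrite gmetC gmetDr gmet_orthIST_qcomb // mul0r addr0 gmetC hv.
have : gmet e (pJ e) = 0.
  by rewrite -(ge _ (tproj_orthIST (pJ e) hN)) gmetDr gmet_orthIST_qcomb // mul0r addr0.
move/gmet_pJ_eq0; rewrite /e /tproj => /padd_qcomb_eq0 ->.
by rewrite oppr0; do 3 eexists.
Qed.

Lemma orthIST_qcomb a b c d Y : gmet Y Y != 0 -> orthIST Y (qcomb a b c d Y) ->
  qcomb a b c d Y = pscale a Y.
Proof.
move=> hN; rewrite /orthIST; have [-> -> ->] := gmet_qcomb a b c d Y.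
case=> /eqP + /eqP + /eqP; rewrite !oppr_eq0 !mulf_eq0 (negbTE hN) !orbF.
by move=> /eqP -> /eqP -> /eqP ->; clear hN; coords Y; pt_ring.
Qed.

Lemma qspan_opI Y v : qspan Y (opI v) -> qspan Y v.
Proof.
rewrite {2}(_ : v = pscale (-1) (opI (opI v))); last by coords v; pt_ring.
by case=> a [b] [c] [d] ->; exists b, (- a), d, (- c); coords Y; pt_ring.
Qed.

Lemma qspan_opS Y v : qspan Y (opS v) -> qspan Y v.
Proof.
rewrite {2}(_ : v = opS (opS v)); last by coords v; pt_ring.
by case=> a [b] [c] [d] ->; exists c, (- d), a, (- b); coords Y; pt_ring.
Qed.

Lemma qspan_opT Y v : qspan Y (opT v) -> qspan Y v.
Proof.
rewrite {2}(_ : v = opT (opT v)); last by coords v; pt_ring.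
by case=> a [b] [c] [d] ->; exists d, c, b, a; coords Y; pt_ring.
Qed.

Lemma radical_orthIST (A : pt -> pt) Y v : gmet Y Y != 0 ->
  (forall Z W, gmet Z (A W) = - gmet (A Z) W) -> (forall v, qspan Y (A v) -> qspan Y v) ->
  orthIST Y v -> (forall w, orthIST Y w -> gmet v (A w) = 0) -> exists k, v = pscale k Y.
Proof.
move=> hN skewA spanA tv hv.
have [b [c [d hAv]]] : exists b c d, A v = qcomb 0 b c d Y.
  by apply: orthIST_perp => // w /hv; rewrite skewA => /eqP; rewrite oppr_eq0 => /eqP.
have [a [b' [c' [d' Ev]]]] : qspan Y v by apply: spanA; exists 0, b, c, d.
by exists a; rewrite Ev orthIST_qcomb // -Ev.
Qed.

Lemma pt_mul_eq0 (c : 'I_2 -> R[i]) Y : (forall k, c k != 0) ->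
  (fun k => c k * Y.1 k, fun k => c k * Y.2 k) = pzero R -> Y = pzero R.
Proof.
move=> hc H; apply: pt_eq => /=;
  [move: (congr1 (fun Z => Z.1 ord0) H) | move: (congr1 (fun Z => Z.1 ord_max) H)
  | move: (congr1 (fun Z => Z.2 ord0) H) | move: (congr1 (fun Z => Z.2 ord_max) H)];
  by move=> /= /eqP; rewrite mulf_eq0 (negbTE (hc _)) => /eqP.
Qed.

Lemma gmet_opI_opT Y : gmet (opI Y) (opT Y) = 0. Proof. coords Y; pt_ring. Qed.
Lemma gmet_opS_opT Y : gmet (opS Y) (opT Y) = 0. Proof. coords Y; pt_ring. Qed.
Lemma gmet_opT_opT Y : gmet (opT Y) (opT Y) = - gmet Y Y. Proof. coords Y; pt_ring. Qed.
Lemma gmet_opT_opI Y W : gmet (opT Y) (opI W) = gmet (opS Y) W.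
Proof. coords Y; coords W; pt_ring. Qed.

(* x1 I + x2 S + x3 T squares to (x2^2 + x3^2 - x1^2) since I, S, T anticommute
   with I^2 = -1 and S^2 = T^2 = 1. *)
Definition qop (x1 x2 x3 : R) Y : pt :=
  padd (pscale x1 (opI Y)) (padd (pscale x2 (opS Y)) (pscale x3 (opT Y))).

Lemma qop_qop (x1 x2 x3 : R) Y :
  qop x1 x2 x3 (qop x1 x2 x3 Y) = pscale (x2 ^+ 2 + x3 ^+ 2 - x1 ^+ 2) Y.
Proof. rewrite /qop; coords Y; pt_ring. Qed.

Lemma qop_eq0 (x1 x2 x3 : R) Y : x2 ^+ 2 + x3 ^+ 2 - x1 ^+ 2 != 0 ->
  qop x1 x2 x3 Y = pzero R -> Y = pzero R.
Proof.
move=> hD hQ; apply: (@pt_mul_eq0 (fun=> (x2 ^+ 2 + x3 ^+ 2 - x1 ^+ 2)%:C)).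
  by move=> _; rewrite fmorph_eq0.
by rewrite -[LHS]/(pscale _ Y) -qop_qop hQ /qop; pt_ring.
Qed.

Definition qmoments (x1 x2 x3 : R) (z w : R[i]) : R[i] :=
  let: (a, b, e, f) := (complex.Re z, complex.Im z, complex.Re w, complex.Im w) in
  (2 * x1 * (a * f - b * e) + x2 * (a ^+ 2 + b ^+ 2 + e ^+ 2 + f ^+ 2)) +i*
  (2 * x1 * (a * e + b * f) + x3 * (a ^+ 2 + b ^+ 2 + e ^+ 2 + f ^+ 2)).

Lemma qmomentsE (x1 x2 x3 : R) Y k : qmoments x1 x2 x3 (Y.1 k) (Y.2 k) =
  (qop x1 x2 x3 Y).1 k * (Y.2 k)^* + Y.1 k * ((qop x1 x2 x3 Y).2 k)^*.
Proof.
rewrite /qmoments /qop /padd /pscale /opI /opS /opT /=.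
by case: (Y.1 k) => a b; case: (Y.2 k) => e f /=; congr (_ +i* _); ring.
Qed.

Lemma qop_eq0_moments (x1 x2 x3 : R) Y k : qop x1 x2 x3 Y = pzero R ->
  qmoments x1 x2 x3 (Y.1 k) (Y.2 k) = 0.
Proof.
move=> hQ; rewrite qmomentsE hQ /= mul0r add0r.
by case: (Y.1 k) => a b; apply/eqP; rewrite eq_complex /= oppr0 !mulr0 subr0 addr0 eqxx.
Qed.

End Quaternionic.

Section GeneratorOfN.
Variable R : rcfType.
Local Notation pt := (pt R).
Variable u : 'I_2 -> int.
Hypothesis u2_1 : u ord_max = 1.
Local Notation U := ((u ord0)%:~R : R).

Definition n_gen : 'I_2 -> R := fun k => if k == ord0 then 1 else - U.

Lemma in_nE X : in_n u X <-> X ord_max = - U * X ord0.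
Proof.
rewrite /in_n sum_ord2 u2_1 mul1r; split => [H | ->]; last by ring.
by rewrite -(subr0 (X ord_max)) -H; ring.
Qed.

Lemma n_gen_in_n : in_n u n_gen. Proof. by apply/in_nE; rewrite /n_gen /= mulr1. Qed.

Lemma fund_in_n X (p : pt) : in_n u X -> fund X p = pscale (X ord0) (fund n_gen p).
Proof.
move/in_nE => HX; coords p; apply: pt_eq; rewrite /= ?HX /n_gen /=; congr (_ +i* _); ring.
Qed.

Lemma vertical_pscale k (p : pt) :
  exists X, in_n u X /\ peq (pscale k (fund n_gen p)) (fund X p).
Proof.
exists (fun j => k * n_gen j); split; first by apply/in_nE; rewrite /n_gen /=; ring.
suff -> : pscale k (fund n_gen p) = fund (fun j => k * n_gen j) p by [].
by coords p; apply: pt_eq; rewrite /= /n_gen /=; congr (_ +i* _); ring.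
Qed.

Lemma dmuI_gmet (p v : pt) X : dmuI p v X = - gmet (opI (fund X p)) v.
Proof. by coords p; coords v; rewrite /dmuI /fund sum_ord2; pt_ring. Qed.

Lemma Re_dmuC_gmet (p v : pt) X : complex.Re (dmuC p v X) = - gmet (opS (fund X p)) v.
Proof. by coords p; coords v; rewrite /dmuC /fund sum_ord2; pt_ring. Qed.

Lemma Im_dmuC_gmet (p v : pt) X : complex.Im (dmuC p v X) = - gmet (opT (fund X p)) v.
Proof. by coords p; coords v; rewrite /dmuC /fund sum_ord2; pt_ring. Qed.

Lemma tangentE (p v : pt) : tangent u p v <-> orthIST (fund n_gen p) v.
Proof.
split => [H | [hI hS hT] X /fund_in_n hX].
  have [hI hC] := H _ n_gen_in_n.
  move: hI (congr1 (@complex.Re R) hC) (congr1 (@complex.Im R) hC).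
  rewrite dmuI_gmet Re_dmuC_gmet Im_dmuC_gmet /= => /eqP + /eqP + /eqP.
  by rewrite !oppr_eq0 => /eqP ? /eqP ? /eqP ?; split.
split; first by rewrite dmuI_gmet hX opI_pscale gmetZl hI mulr0 oppr0.
apply/eqP; rewrite eq_complex Re_dmuC_gmet Im_dmuC_gmet hX opS_pscale opT_pscale.
by rewrite !gmetZl hS hT mulr0 oppr0 eqxx.
Qed.

Lemma nondeg_of_gmet_fund (p : pt) : gmet (fund n_gen p) (fund n_gen p) != 0 ->
  nondeg_at u (@opI R) p /\ nondeg_at u (@opS R) p /\ nondeg_at u (@opT R) p.
Proof.
set F := fund n_gen p => hF.
have nondeg (A : pt -> pt) : (forall Z W, gmet Z (A W) = - gmet (A Z) W) ->
    (forall v, qspan F (A v) -> qspan F v) -> nondeg_at u A p.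
  move=> skewA spanA v /tangentE tv hv.
  have [k ->] : exists k, v = pscale k F.
    by apply: radical_orthIST tv _ => // w /tangentE; apply: hv.
  exact: vertical_pscale.
split; [|split]; apply: nondeg.
- exact: gmet_opI.
- exact: qspan_opI.
- exact: gmet_opS.
- exact: qspan_opS.
- exact: gmet_opT.
- exact: qspan_opT.
Qed.

Lemma fund_qop X1 X2 X3 (p : pt) : in_n u X1 -> in_n u X2 -> in_n u X3 ->
  padd (opI (fund X1 p)) (padd (opS (fund X2 p)) (opT (fund X3 p))) =
  fund n_gen (qop (X1 ord0) (X2 ord0) (X3 ord0) p).
Proof.
move=> /fund_in_n -> /fund_in_n -> /fund_in_n ->.
by coords p; rewrite /qop /fund /n_gen; pt_ring.
Qed.

Lemma fund_n_gen_eq0 (p : pt) : u ord0 != 0 -> fund n_gen p = pzero R -> p = pzero R.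
Proof.
move=> u1_neq0; apply: pt_mul_eq0 => k; rewrite mulf_eq0 negb_or fmorph_eq0.
rewrite (_ : 'i != 0); last by rewrite eq_complex /= oner_eq0 andbF.
by case: (ord2P k) => ->; rewrite /n_gen /= ?oner_eq0 // oppr_eq0 intr_eq0.
Qed.

Lemma in_n_eq0 (X : 'I_2 -> R) : in_n u X -> X ord0 = 0 -> forall k, X k = 0.
Proof.
by move=> /in_nE hX h0 k; case: (ord2P k) => ->; rewrite ?hX h0 ?mulr0.
Qed.

End GeneratorOfN.

Section Reduction.
Variable R : rcfType.
Local Notation pt := (pt R).
Variable u : 'I_2 -> int.
Hypotheses (u2_1 : u ord_max = 1) (u1_gt0 : 0 < u ord0).
Variables (l1 : 'I_2 -> R) (lc : 'I_2 -> R[i]).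
Local Notation U := ((u ord0)%:~R : R).
Local Notation F p := (fund (n_gen R u) p).

(* (cone_a, cone_br + i cone_bi) = u_1 V_2 - V_1 with V_1 = (l1_1, lc_1): V_2 is
   interior to K_1 iff this point is interior to the cone {a >= |b|}. *)
Definition cone_a := U * l1 ord_max - l1 ord0.
Definition cone_br := U * complex.Re (lc ord_max) - complex.Re (lc ord0).
Definition cone_bi := U * complex.Im (lc ord_max) - complex.Im (lc ord0).

Lemma levelE (a b c d e f g h : R) :
  in_level u l1 lc (mkpt (a +i* b) (c +i* d) (e +i* f) (g +i* h)) <->
  [/\ (a^+2 + b^+2 + e^+2 + f^+2) - U * (c^+2 + d^+2 + g^+2 + h^+2) = 2 * cone_a,
      (a * f - b * e) - U * (c * h - d * g) = cone_br
    & (a * e + b * f) - U * (c * g + d * h) = cone_bi].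
Proof.
rewrite /cone_a /cone_br /cone_bi.
case E0: (lc ord0) => [r0 i0]; case Em: (lc ord_max) => [rm im] /=.
split => [H | [h1 h2 h3] X /(in_nE u2_1) HX].
  have [] := H _ (n_gen_in_n R u2_1).
  rewrite /muI /muC !sum_ord2 !normc_sqr E0 Em /n_gen /= => h1 /eqP.
  rewrite eq_complex /= => /andP[/eqP h2 /eqP h3].
  by split; apply/eqP; rewrite -subr_eq0; apply/eqP;
    [rewrite -[RHS](mulr0 2) -h1 | rewrite -h2 | rewrite -h3]; field.
rewrite /muI /muC !sum_ord2 !normc_sqr E0 Em /= HX; split.
  rewrite (_ : l1 ord0 = U * l1 ord_max -
      (a^+2 + b^+2 + e^+2 + f^+2 - U * (c^+2 + d^+2 + g^+2 + h^+2)) / 2); first by field.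
  by rewrite h1; field.
rewrite (_ : r0 = U * rm - ((a * f - b * e) - U * (c * h - d * g))); last by rewrite h2; ring.
rewrite (_ : i0 = U * im - ((a * e + b * f) - U * (c * g + d * h))); last by rewrite h3; ring.
by apply/eqP; rewrite eq_complex /=; apply/andP; split; apply/eqP; ring.
Qed.

Local Notation A := cone_a.
Local Notation Br := cone_br.
Local Notation Bi := cone_bi.

Lemma u1R_gt0 : 0 < U. Proof. by rewrite ltr0z. Qed.

Lemma cone_interior : V2_in_interior_K1 u l1 lc ->
  0 < A /\ Br ^+ 2 + Bi ^+ 2 < A ^+ 2.
Proof.
case=> e e_gt0 He; have U_gt0 := u1R_gt0; have U_neq0 : U != 0 by rewrite gt_eqF.
have := He (l1 ord_max - e / 2) (lc ord_max).
rewrite /in_K1 -[(u ord0)%:~R](rmorph_int (real_complex R)) divc_real.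
rewrite /cone_a /cone_br /cone_bi.
case: (lc ord0) => r0 i0; case: (lc ord_max) => rm im /=.
rewrite !subrr expr0n addr0 sqrtr0 (_ : _ - e / 2 - _ = - (e / 2)); last by ring.
rewrite normrN ger0_norm; last by lra.
move=> /(_ ltac:(lra) e_gt0).
set xr := rm - r0 / U; set xi := im - i0 / U; set a := l1 ord_max - l1 ord0 / U.
rewrite (_ : _ - e / 2 - _ = a - e / 2); last by rewrite /a; ring.
have s_ge0 := sqrtr_ge0 (xr ^+ 2 + xi ^+ 2).
have s_sqr := sqr_sqrtr (addr_ge0 (sqr_ge0 xr) (sqr_ge0 xi)).
set s := Num.sqrt _ in s_ge0 s_sqr * => hs.
rewrite (_ : U * l1 ord_max - l1 ord0 = U * a); last by rewrite /a; field.
rewrite (_ : U * rm - r0 = U * xr); last by rewrite /xr; field.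
rewrite (_ : U * im - i0 = U * xi); last by rewrite /xi; field.
split; first by apply: mulr_gt0 => //; lra.
rewrite !exprMn -mulrDr ltr_pM2l ?exprn_gt0 // -s_sqr; nra.
Qed.

Hypothesis A_gt0 : 0 < A.

Lemma level_pair0_neq0 (p : pt) : in_level u l1 lc p -> p.1 ord0 = 0 -> p.2 ord0 = 0 -> False.
Proof.
elim/pt_coords: p => a b c d e f g h /levelE [h1 _ _] /= /eqP + /eqP.
rewrite !eq_complex /= => /andP[/eqP ha /eqP hb] /andP[/eqP he /eqP hf].
have S_ge0 : 0 <= c ^+ 2 + d ^+ 2 + g ^+ 2 + h ^+ 2 by rewrite !addr_ge0 ?sqr_ge0.
move: h1 A_gt0 (mulr_ge0 (ltW u1R_gt0) S_ge0); rewrite ha hb he hf expr0n /=; lra.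
Qed.

Lemma free_action : N_acts_freely u l1 lc.
Proof.
move=> p hp g [_ hg] hfix.
have g1 : g ord0 = 1.
  case: (eqVneq (g ord0) 1) => [// | g_neq1]; exfalso.
  have fixed0 (z : R[i]) : g ord0 * z = z -> z = 0.
    move/eqP; rewrite -subr_eq0 -{2}[z]mul1r -mulrBl mulf_eq0 subr_eq0 (negbTE g_neq1).
    by move/eqP.
  have [hz hw] := hfix ord0.
  exact: level_pair0_neq0 hp (fixed0 _ hz) (fixed0 _ hw).
have g2 : g ord_max = 1 by move: hg; rewrite prod_ord2 g1 exp1rz mul1r u2_1 expr1z.
by move=> k; case: (ord2P k) => ->.
Qed.

Lemma cone_moments (p : pt) (x1 x2 x3 : R) : in_level u l1 lc p ->
  qop x1 x2 x3 p = pzero R -> x1 * Br = - (x2 * A) /\ x1 * Bi = - (x3 * A).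
Proof.
elim/pt_coords: p => a b c d e f g h /levelE [hS hB hC] hQ.
move: (qop_eq0_moments ord0 hQ) (qop_eq0_moments ord_max hQ); rewrite /qmoments /=.
move=> /eqP + /eqP; rewrite !eq_complex /=.
move=> /andP[/eqP m0 /eqP m0'] /andP[/eqP m1 /eqP m1'].
by split; [apply: cone_moment_relation hS hB m0 m1 | apply: cone_moment_relation hS hC m0' m1'].
Qed.

Hypothesis cone : Br ^+ 2 + Bi ^+ 2 < A ^+ 2.

Lemma condS_holds : condS u l1 lc.
Proof.
move=> p hp X1 X2 X3 h1 h2 h3; rewrite (fund_qop u2_1 p h1 h2 h3).
move=> /peqP /(fund_n_gen_eq0 (lt0r_neq0 u1_gt0)) hQ.
have [eR eI] := cone_moments hp hQ.
have A_neq0 : A != 0 by rewrite gt_eqF.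
have mul_A_eq0 x : 0 = - (x * A) -> x = 0.
  by move/eqP; rewrite eq_sym oppr_eq0 mulf_eq0 (negbTE A_neq0) orbF => /eqP.
case: (eqVneq (X1 ord0) 0) => [x1_0 | x1_neq0].
  rewrite x1_0 !mul0r in eR eI.
  have x2_0 := mul_A_eq0 _ eR; have x3_0 := mul_A_eq0 _ eI.
  by move=> k; rewrite (in_n_eq0 u2_1 h1 x1_0) (in_n_eq0 u2_1 h2 x2_0) (in_n_eq0 u2_1 h3 x3_0).
exfalso; set x1 := X1 ord0 in eR eI x1_neq0 hQ.
set x2 := X2 ord0 in eR hQ; set x3 := X3 ord0 in eI hQ.
have hD : (x2 ^+ 2 + x3 ^+ 2 - x1 ^+ 2) * A ^+ 2 = x1 ^+ 2 * (Br ^+ 2 + Bi ^+ 2 - A ^+ 2).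
  transitivity ((x2 * A) ^+ 2 + (x3 * A) ^+ 2 - x1 ^+ 2 * A ^+ 2); first by ring.
  by rewrite -[(x2 * A) ^+ 2]sqrrN -[(x3 * A) ^+ 2]sqrrN -eR -eI; ring.
have D_neq0 : x2 ^+ 2 + x3 ^+ 2 - x1 ^+ 2 != 0.
  apply: contraTneq cone => D0; move: hD; rewrite D0 mul0r => /esym /eqP.
  by rewrite mulf_eq0 sqrf_eq0 (negbTE x1_neq0) subr_eq0 => /eqP ->; rewrite ltxx.
have p0 := qop_eq0 D_neq0 hQ.
by apply: (level_pair0_neq0 hp); rewrite p0.
Qed.

(* For u_1 = 1, |B|^2 - A^2 = S_1^2 + S_2^2 - g(F,F)^2/4 for two quadratic forms
   S_1, S_2, so a null F would put (A, B) outside the open cone. *)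
Lemma gmet_fund_neq0 (p : pt) : u ord0 = 1 -> in_level u l1 lc p ->
  gmet (F p) (F p) != 0.
Proof.
move=> u1_1; have U1 : U = 1 by rewrite u1_1.
elim/pt_coords: p => a b c d e f g h /levelE [].
rewrite /gmet /fund /n_gen /mkpt sum_ord2 /= U1 !mul1r => hS hB hC; apply/eqP => Q0.
have {}Q0 : (a^+2 + b^+2 - e^+2 - f^+2) + (c^+2 + d^+2 - g^+2 - h^+2) = 0.
  by rewrite -Q0; ring.
have : Br ^+ 2 + Bi ^+ 2 - A ^+ 2 =
    (a * c + b * d - e * g - f * h) ^+ 2 + (b * c - a * d - f * g + e * h) ^+ 2
    - ((a^+2 + b^+2 - e^+2 - f^+2) + (c^+2 + d^+2 - g^+2 - h^+2)) ^+ 2 / 4.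
  rewrite -hB -hC (_ : A = (2 * A) / 2); last by rewrite mulrC mulKf ?pnatr_eq0.
  by rewrite -hS; field.
rewrite Q0 expr0n /= mul0r subr0 => E.
have : 0 <= Br ^+ 2 + Bi ^+ 2 - A ^+ 2 by rewrite E addr_ge0 ?sqr_ge0.
by rewrite subr_ge0 leNgt cone.
Qed.

(* The w_2-component of TF is -u_1 z_2, while vertical vectors vanish there. *)
Lemma isotropic_not_nondeg (p : pt) : gmet (F p) (F p) = 0 ->
  p.2 ord_max = 0 -> p.1 ord_max != 0 -> ~ nondeg_at u (@opI R) p.
Proof.
set Fp := F p => F0 w2_0 z2_neq0 hnd.
have tT : tangent u p (opT Fp).
  by apply/(tangentE u2_1); split; rewrite ?gmet_opI_opT ?gmet_opS_opT // gmet_opT_opT F0 oppr0.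
have radT w : tangent u p w -> omega (@opI R) (opT Fp) w = 0.
  by case/(tangentE u2_1) => _ hS _; rewrite /omega gmet_opT_opI.
have [X [_ /(_ ord_max) [_]]] := hnd _ tT radT.
rewrite /Fp /fund /opT /opI /opS /= w2_0 mulr0 /n_gen /= => /eqP.
rewrite oppr_eq0 !mulf_eq0 (negbTE z2_neq0) fmorph_eq0 oppr_eq0 intr_eq0.
rewrite (negbTE (lt0r_neq0 u1_gt0)).
by rewrite eq_complex /= oner_eq0 andbF.
Qed.

(* With |w_1|^2 = m and z_1 = (B_i - i B_r) / sqrt m, the last two level equations
   hold, the first one is the quadratic for m, and u_1^2 |z_2|^2 = m - |B|^2 / m
   makes F null. *)
Lemma degenerate_level_point : 1 < u ord0 -> exists p : pt,
  [/\ in_level u l1 lc p, gmet (F p) (F p) = 0,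
      p.2 ord_max = 0 & p.1 ord_max != 0].
Proof.
move=> u1_gt1; have U_gt1 : 1 < U by rewrite ltr1z.
have U_neq0 : U != 0 by rewrite gt_eqF // (lt_trans ltr01).
have B_ge0 : 0 <= Br ^+ 2 + Bi ^+ 2 by rewrite addr_ge0 ?sqr_ge0.
have [m m_gt0 [B_lt quad]] := quadratic_root U_gt1 A_gt0 B_ge0 cone.
set B := Br ^+ 2 + Bi ^+ 2 in B_ge0 B_lt quad.
have m_neq0 : m != 0 by rewrite gt_eqF.
have c2_gt0 : 0 < (m - B / m) / U ^+ 2.
  apply: divr_gt0; last by rewrite exprn_gt0 // (lt_trans ltr01).
  by rewrite subr_gt0 ltr_pdivrMr // -expr2.
have sm_gt0 : 0 < Num.sqrt m by rewrite sqrtr_gt0.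
have c_gt0 : 0 < Num.sqrt ((m - B / m) / U ^+ 2) by rewrite sqrtr_gt0.
have sm2 := sqr_sqrtr (ltW m_gt0); have c2 := sqr_sqrtr (ltW c2_gt0).
set sm := Num.sqrt m in sm_gt0 sm2 *; set c := Num.sqrt _ in c_gt0 c2 *.
have sm_neq0 : sm != 0 by rewrite gt_eqF.
exists (mkpt ((Bi / sm) +i* (- Br / sm)) (c +i* 0) (sm +i* 0) (0 +i* 0)); split.
- apply/levelE; split; last 2 first.
  + by field; rewrite sm_neq0.
  + by field; rewrite sm_neq0.
  rewrite !expr_div_n sqrrN sm2 c2 expr0n /= !addr0; apply/eqP; rewrite -subr_eq0; apply/eqP.
  transitivity (((U - 1) * m ^+ 2 - 2 * A * U * m + (U + 1) * B) / (U * m)).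
    by rewrite /B; field; rewrite m_neq0 U_neq0.
  by rewrite quad mul0r.
- rewrite /gmet /fund /n_gen /mkpt sum_ord2 /=.
  transitivity ((Bi ^+ 2 + Br ^+ 2) / sm ^+ 2 - sm ^+ 2 + U ^+ 2 * c ^+ 2).
    by field; rewrite sm_neq0.
  by rewrite sm2 c2 /B; field; rewrite m_neq0 U_neq0.
- by apply/eqP; rewrite eq_complex /= !eqxx.
- by rewrite eq_complex /= eqxx andbT gt_eqF.
Qed.

End Reduction.

Theorem mainTheorem18 (R : rcfType) (u : 'I_2 -> int) (l1 : 'I_2 -> R) (lc : 'I_2 -> R[i]) :
  0 < u ord0 -> u ord_max = 1 ->
  V2_in_interior_K1 u l1 lc ->
  N_acts_freely u l1 lc /\ condS u l1 lc /\
  (hypersymplectic_nondeg u l1 lc <-> u ord0 = 1).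
Proof.
move=> u1_gt0 u2_1 /(cone_interior u1_gt0) [A_gt0 cone].
split; first exact: free_action.
split; first exact: condS_holds.
split => [hnd | u1_1 p hp]; last first.
  exact/(nondeg_of_gmet_fund u2_1)/(gmet_fund_neq0 u2_1 cone u1_1 hp).
have [u1_gt1 | //] : (1 < u ord0)%R \/ u ord0 = 1 by lia.
have [p [hp F0 w2_0 z2_neq0]] := degenerate_level_point u2_1 A_gt0 cone u1_gt1.
by case: (hnd p hp) => hI _; case: (isotropic_not_nondeg u2_1 u1_gt0 F0 w2_0 z2_neq0 hI).
Qed.
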